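(* Let $M$ and $M'$ be two stable matchings in an instance $I$ of SPA-S, and let $M^\land$ be the assignment defined from $M,M'$ in the context. Then $M^\land$ is a matching.
   Context: An instance $I$ of SPA-S consists of a finite set $\mathcal{S}$ of students, a finite set $\mathcal{P}$ of projects and a finite set $\mathcal{L}$ of lecturers. Each student $s_i$ ranks a subset $A_i\subseteq\mathcal{P}$ (its acceptable projects) in strict order. Each project is offered by exactly one lecturer; lecturer $l_k$ offers a nonempty set $P_k\subseteq\mathcal{P}$, the $P_k$ partitioning $\mathcal{P}$. Each lecturer $l_k$ ranks in strict order the students who find at least one project of $P_k$ acceptable. Projects have capacities $c_j\in\mathbb{Z}^+$, lecturers have capacities $d_k\in\mathbb{Z}^+$ with $\max\{c_j:p_j\in P_k\}\le d_k\le\sum\{c_j:p_j\in P_k\}$. A pair $(s_i,p_j)$, $p_j$ offered by $l_k$, is acceptable if $p_j\in A_i$ and $s_i$ is on $l_k$'s list. A matching $M$ is a set of acceptable pairs with each student in at most one pair, $|M(p_j)|\le c_j$, $|M(l_k)|\le d_k$, where for an assignment $M$ (a set of acceptable pairs), $M(s_i)$, $M(p_j)$, $M(l_k)$ denote the project of $s_i$, the students assigned to $p_j$, and the students assigned to projects of $l_k$. Undersubscribed/full means fewer than/exactly capacity many assigned students. An acceptable pair $(s_i,p_j)\notin M$ ($p_j$ offered by $l_k$) blocks $M$ if ($s_i$ is unassigned or prefers $p_j$ to $M(s_i)$) and one of: (P1) $p_j$ and $l_k$ undersubscribed; (P2) $p_j$ undersubscribed, $l_k$ full, $s_i\in M(l_k)$;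 (P3) $p_j$ undersubscribed, $l_k$ full, $l_k$ prefers $s_i$ to the worst student of $M(l_k)$; (P4) $p_j$ full and $l_k$ prefers $s_i$ to the worst student of $M(p_j)$. $M$ is stable if it has no blocking pair. Given stable matchings $M,M'$, $M^\land$ is the assignment in which each student unassigned in both $M$ and $M'$ is unassigned, each student assigned to the same project in both is assigned to that project, and every other student is assigned to the better (in her preference) of her projects in $M$ and $M'$. *)

From mathcomp Require Import all_boot.
Set Implicit Arguments. Unset Strict Implicit. Unset Printing Implicit Defensive.

Section SPAS.
Variables (S P L : finType). (* students, projects, lecturers *)

(* An SPA-S instance.  Strict preference lists are given by rank functions
   (smaller rank = more preferred), required injective on the list in
   [wf_instance]. *)
Record instance := Instance {
  sacc  : S -> P -> bool;
  srank : S -> P -> nat;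
  offer : P -> L;
  lrank : L -> S -> nat;
  cap_p : P -> nat;
  cap_l : L -> nat
}.

Variable I : instance.

Definition on_list (l : L) (s : S) : bool :=
  [exists p, sacc I s p && (offer I p == l)].

Definition offered (l : L) : {set P} := [set p | offer I p == l].

Definition wf_instance : Prop :=
  [/\ (forall s p q, sacc I s p -> sacc I s q -> srank I s p = srank I s q -> p = q),
      (forall l s t, on_list l s -> on_list l t -> lrank I l s = lrank I l t -> s = t),
      (forall l, offered l != set0),
      ((forall p, 0 < cap_p I p) /\ (forall l, 0 < cap_l I l)) &
      (forall l, (\max_(p in offered l) cap_p I p <= cap_l I l)
                 /\ (cap_l I l <= \sum_(p in offered l) cap_p I p))].

Definition acceptable (s : S) (p : P) : bool :=
  sacc I s p && on_list (offer I p) s.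

Definition sprefers (s : S) (p q : P) : bool := srank I s p < srank I s q.
Definition lprefers (l : L) (s t : S) : bool := lrank I l s < lrank I l t.

Definition assignment := S -> option P.

Definition Mp (M : assignment) (p : P) : {set S} := [set s | M s == Some p].
Definition Ml (M : assignment) (l : L) : {set S} :=
  [set s | if M s is Some p then offer I p == l else false].

Definition is_matching (M : assignment) : Prop :=
  [/\ (forall s p, M s = Some p -> acceptable s p),
      (forall p, #|Mp M p| <= cap_p I p) &
      (forall l, #|Ml M l| <= cap_l I l)].

Definition p_under M p := #|Mp M p| < cap_p I p.
Definition p_full  M p := #|Mp M p| == cap_p I p.
Definition l_under M l := #|Ml M l| < cap_l I l.
Definition l_full  M l := #|Ml M l| == cap_l I l.

(* "l prefers s to the worst student of X" (X nonempty) is equivalent to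
   s being preferred to some member of X. *)
Definition prefers_to_worst (l : L) (s : S) (X : {set S}) : bool :=
  [exists t in X, lprefers l s t].

Definition blocks (M : assignment) (s : S) (p : P) : bool :=
  let l := offer I p in
  [&& acceptable s p, M s != Some p,
      (if M s is Some q then sprefers s p q else true) &
      [|| p_under M p && l_under M l
        , [&& p_under M p, l_full M l & s \in Ml M l]
        , [&& p_under M p, l_full M l & prefers_to_worst l s (Ml M l)]
        | p_full M p && prefers_to_worst l s (Mp M p)]].

Definition stable (M : assignment) : Prop :=
  is_matching M /\ forall s p, ~~ blocks M s p.

Definition meet (M M' : assignment) : assignment := fun s =>
  match M s, M' s with
  | None, None => None
  | Some p, None => Some p
  | None, Some q => Some q
  | Some p, Some q => if sprefers s q p then Some q else Some p
  end.

End SPAS.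

From mathcomp Require Import all_boot.

(* Suppose a project p, or a lecturer l, is oversubscribed in M^∧. Then it has
   gained a student s with respect to M, and a student t with respect to M'.
   As (s, p) does not block M, the lecturer l ranks s no higher than every
   student of M(p), resp. M(l) (for l this uses that p is undersubscribed in
   M, which is why project capacities come first); t is one of those students.
   Symmetrically t is ranked no higher than s, so s = t, although s is not
   assigned in M to p (resp. to l) and t is. The symmetry between M and M' in
   M^∧ holds because student preference lists are strict. *)

Set Implicit Arguments.
Unset Strict Implicit.
Unset Printing Implicit Defensive.

Section Meet.
Variables (S P L : finType) (I : instance S P L).
Implicit Types (N : assignment S P) (s t : S) (p : P) (l : L) (A B : {set S}).

Lemma eq_Mp N N' p : N =1 N' -> Mp N p = Mp N' p.
Proof. by move=> eqN; apply/setP => s; rewrite !inE eqN. Qed.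

Lemma eq_Ml N N' l : N =1 N' -> Ml I N l = Ml I N' l.
Proof. by move=> eqN; apply/setP => s; rewrite !inE eqN. Qed.

Lemma Mp_sub_Ml N p : Mp N p \subset Ml I N (offer I p).
Proof. by apply/subsetP => s; rewrite !inE => /eqP ->. Qed.

Lemma card_Ml N l : #|Ml I N l| = \sum_(p | offer I p == l) #|Mp N p|.
Proof.
rewrite -sum1_card big_mkcond.
rewrite [RHS](eq_bigr (fun p => \sum_s (if s \in Mp N p then 1 else 0))); last first.
  by move=> p _; rewrite -sum1_card big_mkcond.
rewrite exchange_big; apply: eq_bigr => s _ /=.
under eq_bigr do rewrite inE.
(* [inE] does not rewrite the membership test produced by [big_mkcond]. *)
have -> : s \in Ml I N l = if N s is Some q then offer I q == l else false by rewrite inE.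
case: (N s) => [q|]; last by rewrite big1.
rewrite big_mkcond (bigD1 q) //= big1 ?addn0 => [|i /negbTE neq]; first by rewrite eqxx.
by rewrite (inj_eq Some_inj) [q == i]eq_sym neq if_same.
Qed.

Lemma exists_gain_Mp N N' p :
  #|Mp N p| < #|Mp N' p| -> exists2 s, N' s = Some p & N s != Some p.
Proof.
move=> lt; have /subsetPn [s] : ~~ (Mp N' p \subset Mp N p).
  by apply/negP => /subset_leq_card; rewrite leqNgt lt.
by rewrite !inE => /eqP N's Ns; exists s.
Qed.

Lemma exists_gain_Ml N N' l :
  #|Ml I N l| < #|Ml I N' l| -> exists2 p, offer I p = l & #|Mp N p| < #|Mp N' p|.
Proof.
rewrite !card_Ml => lt.
have [p /andP [pl ltp] | none] := pickP [pred p | (offer I p == l) && (#|Mp N p| < #|Mp N' p|)].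
  by exists p; first exact/eqP.
move: lt; rewrite ltnNge leq_sum // => p pl.
by move: (none p) => /= /negbT; rewrite pl -leqNgt.
Qed.

Lemma Ml_on_list N s l : is_matching I N -> s \in Ml I N l -> on_list I l s.
Proof.
by case=> acc _ _; rewrite inE; case Ns: (N s) => [q|] // /eqP <-; case/andP: (acc s q Ns).
Qed.

Lemma Mp_on_list N s p : is_matching I N -> s \in Mp N p -> on_list I (offer I p) s.
Proof. by move=> mN /(subsetP (Mp_sub_Ml N p)); apply: Ml_on_list. Qed.

Lemma prefers_to_worstS l s A B :
  A \subset B -> prefers_to_worst I l s A -> prefers_to_worst I l s B.
Proof.
by move=> /subsetP AB /existsP [t /andP [tA st]]; apply/existsP; exists t; rewrite AB.
Qed.

Definition sprefers_to N s p : bool :=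
  if N s is Some q then sprefers I s p q else true.

Lemma not_blocks_under N s p :
  is_matching I N -> acceptable I s p -> N s != Some p -> sprefers_to N s p ->
  ~~ blocks I N s p -> p_under I N p ->
  s \notin Ml I N (offer I p) /\ ~~ prefers_to_worst I (offer I p) s (Ml I N (offer I p)).
Proof.
move=> [_ _ capl] acc Nsp pref; rewrite /blocks acc Nsp -/(sprefers_to N s p) pref /=.
move=> + under; rewrite under /= => /norP [lunder /norP [nin /norP [nworse _]]].
have full : l_full I N (offer I p) by rewrite /l_full eqn_leq capl leqNgt.
by move: nin nworse; rewrite full.
Qed.

Lemma not_blocks_Mp N s p :
  is_matching I N -> acceptable I s p -> N s != Some p -> sprefers_to N s p ->
  ~~ blocks I N s p -> ~~ prefers_to_worst I (offer I p) s (Mp N p).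
Proof.
move=> mN acc Nsp pref nb; have [under | full] := ltnP #|Mp N p| (cap_p I p).
  have [_] := not_blocks_under mN acc Nsp pref nb under.
  by apply: contra; apply: prefers_to_worstS (Mp_sub_Ml N p).
move: nb; case: mN => _ capp _; have pfull : p_full I N p by rewrite /p_full eqn_leq capp.
by rewrite /blocks acc Nsp -/(sprefers_to N s p) pref pfull /= !orbA orbC => /norP [].
Qed.

Hypothesis lrank_inj : forall l s t,
  on_list I l s -> on_list I l t -> lrank I l s = lrank I l t -> s = t.

Lemma not_prefers_to_worst_eq l s t A B :
  on_list I l s -> on_list I l t -> t \in A -> s \in B ->
  ~~ prefers_to_worst I l s A -> ~~ prefers_to_worst I l t B -> s = t.
Proof.
move=> ls lt tA sB /existsPn /(_ t) st /existsPn /(_ s) ts; apply: lrank_inj ls lt _.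
by move: st ts; rewrite tA sB /lprefers /= -!leqNgt => ts st; apply/anti_leq/andP.
Qed.

Lemma meet_some N N' s p : meet I N N' s = Some p -> N s = Some p \/ N' s = Some p.
Proof.
rewrite /meet; case: (N s) => [a|]; case: (N' s) => [b|] //; try case: ifP => _; move=> ->; auto.
Qed.

Lemma meet_gain N N' s p :
  meet I N N' s = Some p -> N s != Some p -> N' s = Some p /\ sprefers_to N s p.
Proof.
rewrite /meet /sprefers_to; case: (N s) => [a|]; case: (N' s) => [b|] //.
  by case: ifP => ba [<-] //; rewrite eqxx.
by move=> [<-]; rewrite eqxx.
Qed.

Hypothesis srank_inj : forall s p q,
  sacc I s p -> sacc I s q -> srank I s p = srank I s q -> p = q.

Lemma meetC N N' : is_matching I N -> is_matching I N' -> meet I N N' =1 meet I N' N.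
Proof.
move=> [accN _ _] [accN' _ _] s; rewrite /meet /sprefers.
case Ns: (N s) => [a|]; case N's: (N' s) => [b|] //.
have /andP [sa _] := accN s a Ns; have /andP [sb _] := accN' s b N's.
by case: ltngtP => // /srank_inj ->.
Qed.

Lemma meet_gain_Mp N N' p :
  stable I N -> is_matching I N' -> #|Mp N p| < #|Mp (meet I N N') p| ->
  exists s, [/\ s \in Mp N' p, s \notin Mp N p & ~~ prefers_to_worst I (offer I p) s (Mp N p)].
Proof.
move=> [mN nbN] [accN' _ _] /exists_gain_Mp [s /meet_gain gain Nsp].
have [N's pref] := gain Nsp.
exists s; rewrite !inE N's Nsp eqxx; split=> //.
exact: not_blocks_Mp mN (accN' s p N's) Nsp pref (nbN s p).
Qed.

Lemma meet_gain_Ml N N' l :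
  stable I N -> is_matching I N' -> (forall p, #|Mp (meet I N N') p| <= cap_p I p) ->
  #|Ml I N l| < #|Ml I (meet I N N') l| ->
  exists s, [/\ s \in Ml I N' l, s \notin Ml I N l & ~~ prefers_to_worst I l s (Ml I N l)].
Proof.
move=> [mN nbN] [accN' _ _] capX /exists_gain_Ml [p <- ltp].
have [s /meet_gain gain Nsp] := exists_gain_Mp ltp.
have [N's pref] := gain Nsp.
have [sN worse] := not_blocks_under mN (accN' s p N's) Nsp pref (nbN s p) (leq_trans ltp (capX p)).
by exists s; rewrite inE N's.
Qed.

Lemma meet_cap_p M M' p :
  stable I M -> stable I M' -> #|Mp (meet I M M') p| <= cap_p I p.
Proof.
move=> stM stM'; have [mM _] := stM; have [mM' _] := stM'.
have [_ capM _] := mM; have [_ capM' _] := mM'.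
rewrite leqNgt; apply/negP => over.
have [s [sM' sM s_worse]] := meet_gain_Mp stM mM' (leq_ltn_trans (capM p) over).
have gainM' : #|Mp M' p| < #|Mp (meet I M' M) p|.
  by rewrite (eq_Mp p (meetC mM' mM)); apply: leq_ltn_trans (capM' p) over.
have [t [tM _ t_worse]] := meet_gain_Mp stM' mM gainM'.
have st := not_prefers_to_worst_eq (Mp_on_list mM' sM') (Mp_on_list mM tM) tM sM' s_worse t_worse.
by rewrite st tM in sM.
Qed.

Lemma meet_cap_l M M' l :
  stable I M -> stable I M' -> #|Ml I (meet I M M') l| <= cap_l I l.
Proof.
move=> stM stM'; have [mM _] := stM; have [mM' _] := stM'.
have [_ _ capM] := mM; have [_ _ capM'] := mM'.
have capX p : #|Mp (meet I M M') p| <= cap_p I p := meet_cap_p p stM stM'.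
have eqX := meetC mM' mM.
rewrite leqNgt; apply/negP => over.
have [s [sM' sM s_worse]] := meet_gain_Ml stM mM' capX (leq_ltn_trans (capM l) over).
have capX' p : #|Mp (meet I M' M) p| <= cap_p I p by rewrite (eq_Mp p eqX).
have gainM' : #|Ml I M' l| < #|Ml I (meet I M' M) l|.
  by rewrite (eq_Ml l eqX); apply: leq_ltn_trans (capM' l) over.
have [t [tM _ t_worse]] := meet_gain_Ml stM' mM capX' gainM'.
have st := not_prefers_to_worst_eq (Ml_on_list mM' sM') (Ml_on_list mM tM) tM sM' s_worse t_worse.
by rewrite st tM in sM.
Qed.

End Meet.

Theorem lemma7 (S P L : finType) (I : instance S P L) (M M' : assignment S P) :
  wf_instance I -> stable I M -> stable I M' -> is_matching I (meet I M M').
Proof.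
move=> [srank_inj lrank_inj _ _ _] stM stM'.
have [[accM _ _] _] := stM; have [[accM' _ _] _] := stM'.
split=> [s p /meet_some [/accM | /accM'] // | p | l].
- exact: meet_cap_p.
- exact: meet_cap_l.
Qed.
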